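(* There does not exist an unconditionally secure QPKE scheme. More precisely, for every (correct) QPKE scheme $(\mathsf{SKGen},\mathsf{PKGen},\mathsf{Enc},\mathsf{Dec})$ there is a computationally unbounded adversary which, in the everlasting-security experiment (receiving a single copy of the public key), recovers the encrypted message $m$ with certainty; in particular the trace distance between the experiment outputs for $m=0$ and $m=1$ equals $1$ for this adversary.
   Context: A QPKE scheme consists of: a PPT algorithm $\mathsf{SKGen}(1^\lambda)$ outputting a classical secret key $\mathsf{sk}$; a QPT algorithm $\mathsf{PKGen}(\mathsf{sk})$ outputting a (possibly mixed) quantum state $\rho$ and a classical string $\mathsf{pk}$; a QPT algorithm $\mathsf{Enc}(\rho,\mathsf{pk},m)$ outputting a ciphertext $\mathsf{ct}$ for $m\in\{0,1\}$; a QPT algorithm $\mathsf{Dec}(\mathsf{sk},\mathsf{ct})$ outputting $m\in\{0,1\}$. Correctness: for all $\lambda$ and $m$, $\Pr[\mathsf{Dec}(\mathsf{sk},\mathsf{Enc}(\rho,\mathsf{pk},m))=m]=1$ where $\mathsf{sk}\gets\mathsf{SKGen}(1^\lambda)$, $(\rho,\mathsf{pk})\gets\mathsf{PKGen}(\mathsf{sk})$. The everlasting-security experiment $\mathsf{Exp}^{\mathcal A}(1^\lambda,m)$: sample $\mathsf{sk}\gets\mathsf{SKGen}(1^\lambda)$, $(\rho,\mathsf{pk})\gets\mathsf{PKGen}(\mathsf{sk})$, give $(\rho,\mathsf{pk})$ to $\mathcal A$, which returns a modified public-key register and an internal register; compute $\mathsf{ct}$ by applying $\mathsf{Enc}(\cdot,\mathsf{pk},m)$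 (with the original $\mathsf{pk}$) to the returned register; output the joint state of $\mathsf{ct}$ and the internal register. Unconditional security would require the trace distance between the outputs for $m=0$ and $m=1$ to be negligible for all adversaries $\mathcal A$, including computationally unbounded ones. *)

From mathcomp Require Import all_boot all_order all_algebra.
From mathcomp Require Import mxtens.
Set Implicit Arguments.
Unset Strict Implicit.
Unset Printing Implicit Defensive.
Import Order.TTheory GRing.Theory Num.Theory.
Local Open Scope ring_scope.

Definition mxadj (C : numClosedFieldType) m n (A : 'M[C]_(m, n)) : 'M[C]_(n, m) :=
  (map_mx Num.conj A)^T.

Definition psdmx (C : numClosedFieldType) n (A : 'M[C]_n) : Prop :=
  forall v : 'rV[C]_n, 0 <= (v *m A *m mxadj v) 0 0.

Definition density (C : numClosedFieldType) n (rho : 'M[C]_n) : Prop :=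
  psdmx rho /\ \tr rho = 1.

(* a quantum channel (CPTP map) from dimension n to dimension m, given by a
   finite list of Kraus operators with sum_K K^dagger K = 1 *)
Definition is_channel (C : numClosedFieldType) n m (ks : seq 'M[C]_(m, n)) : Prop :=
  \sum_(K <- ks) mxadj K *m K = 1%:M.

Definition apply_channel (C : numClosedFieldType) n m (ks : seq 'M[C]_(m, n))
  (rho : 'M[C]_n) : 'M[C]_m :=
  \sum_(K <- ks) K *m rho *m mxadj K.

Definition tens_id (C : numClosedFieldType) n m a (ks : seq 'M[C]_(m, n))
  : seq 'M[C]_(m * a, n * a) :=
  [seq tensmx K (1%:M : 'M[C]_a) | K <- ks].

Definition povm2 (C : numClosedFieldType) n (E : bool -> 'M[C]_n) : Prop :=
  (forall b, psdmx (E b)) /\ E false + E true = 1%:M.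

Definition distribution (C : numClosedFieldType) (T : finType) (p : T -> C) : Prop :=
  (forall x, 0 <= p x) /\ \sum_x p x = 1.

(* trace norm of a normal (here: Hermitian) matrix: sum of the absolute values
   of its eigenvalues (spectral decomposition A = U^-1 diag(d) U) *)
Definition trnorm (C : numClosedFieldType) n (A : 'M[C]_n) : C :=
  \sum_i `|spectral_diag A 0 i|.

Definition trdist (C : numClosedFieldType) n (rho sigma : 'M[C]_n) : C :=
  2^-1 * trnorm (rho - sigma).

(* A QPKE scheme at a fixed security parameter.
   - skgen : distribution of the classical secret key sk : SK
   - pkgen sk pk : the (subnormalised) quantum public-key state rho on dK
       dimensions jointly with the classical public key pk, i.e. PKGen(sk)
       outputs pk with probability tr(pkgen sk pk) and then the state
       pkgen sk pk / tr(pkgen sk pk)  (a classical-quantum state)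
   - enc pk m : Kraus operators of the channel Enc(., pk, m) from the
       public-key register (dim dK) to the ciphertext register (dim dCT)
   - dec sk : the two-outcome measurement Dec(sk, .) on the ciphertext. *)
Record qpke (C : numClosedFieldType) := QPKE {
  SK : finType;
  PK : finType;
  dK : nat;
  dCT : nat;
  skgen : SK -> C;
  pkgen : SK -> PK -> 'M[C]_dK;
  enc : PK -> bool -> seq 'M[C]_(dCT, dK);
  dec : SK -> bool -> 'M[C]_dCT
}.
Arguments SK {C} S : rename.
Arguments PK {C} S : rename.
Arguments dK {C} S : rename.
Arguments dCT {C} S : rename.
Arguments skgen {C} S _ : rename.
Arguments pkgen {C} S _ _ : rename.
Arguments enc {C} S _ _ : rename.
Arguments dec {C} S _ _ : rename.

Definition wf_qpke (C : numClosedFieldType) (S : qpke C) : Prop :=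
  [/\ distribution (skgen S),
      (forall sk, (forall pk, psdmx (pkgen S sk pk)) /\
                  \sum_pk \tr (pkgen S sk pk) = 1),
      (forall pk m, is_channel (enc S pk m)) &
      (forall sk, povm2 (dec S sk))].

Definition success_prob (C : numClosedFieldType) (S : qpke C) (m : bool) : C :=
  \sum_sk skgen S sk *
    \sum_pk \tr (dec S sk m *m apply_channel (enc S pk m) (pkgen S sk pk)).

Definition correct (C : numClosedFieldType) (S : qpke C) : Prop :=
  forall m, success_prob S m = 1.

(* An adversary with internal register of dimension dA: for each classical
   public key pk, a channel from the public-key register (dim dK) to
   (modified public-key register) (x) (internal register), dim dK * dA. *)
Definition adversary (C : numClosedFieldType) (S : qpke C) (dA : nat) :=
  PK S -> seq 'M[C]_(dK S * dA, dK S).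

Definition is_adversary (C : numClosedFieldType) (S : qpke C) dA
  (A : adversary S dA) : Prop := forall pk, is_channel (A pk).

(* Output of Exp^A(1^lambda, m): joint state of ct and the internal register;
   Enc(., pk, m) uses the original pk and acts on the returned register. *)
Definition exp_out (C : numClosedFieldType) (S : qpke C) dA (A : adversary S dA)
  (m : bool) : 'M[C]_(dCT S * dA) :=
  \sum_sk skgen S sk *:
    \sum_pk apply_channel (tens_id dA (enc S pk m))
                          (apply_channel (A pk) (pkgen S sk pk)).

(* The adversary reads the classical public key pk, finds (unboundedly) a
   secret key sk' under which pk has positive probability, discards the
   quantum public key, prepares a fresh copy of the state PKGen(sk') outputs
   alongside pk, and keeps pk in its register.  Perfect correctness implies
   that Dec(sk', .) decrypts every ciphertext of any key pair of positive
   probability, so the measurement "read pk, then apply Dec(sk', .)" recovers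
   m with certainty; outputs distinguished with certainty are at trace
   distance 1. *)
From mathcomp Require Import all_boot all_order all_algebra.
From mathcomp Require Import mxtens sesquilinear spectral ring.
Set Implicit Arguments.
Unset Strict Implicit.
Unset Printing Implicit Defensive.
Import Order.TTheory GRing.Theory Num.Theory Num.Def.
Local Open Scope ring_scope.

Section Adjoint.
Variable C : numClosedFieldType.

Lemma mxadjE m n (A : 'M[C]_(m, n)) : mxadj A = (A ^t* )%sesqui.
Proof. by rewrite /mxadj map_trmx. Qed.

Lemma mxadjK m n (A : 'M[C]_(m, n)) : mxadj (mxadj A) = A.
Proof. by rewrite !mxadjE trmxCK. Qed.

Lemma mxadjM m n p (A : 'M[C]_(m, n)) (B : 'M[C]_(n, p)) :
  mxadj (A *m B) = mxadj B *m mxadj A.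
Proof. by rewrite /mxadj map_mxM trmx_mul. Qed.

Lemma mxadjD m n (A B : 'M[C]_(m, n)) : mxadj (A + B) = mxadj A + mxadj B.
Proof. by rewrite /mxadj map_mxD linearD. Qed.

Lemma mxadjN m n (A : 'M[C]_(m, n)) : mxadj (- A) = - mxadj A.
Proof. by rewrite /mxadj map_mxN linearN. Qed.

Lemma mxadjZ m n (c : C) (A : 'M[C]_(m, n)) : mxadj (c *: A) = c^* *: mxadj A.
Proof. by apply/matrixP=> i j; rewrite !mxE rmorphM. Qed.

Lemma mxadj1 n : mxadj (1%:M : 'M[C]_n) = 1%:M.
Proof. by rewrite /mxadj map_mx1 trmx1. Qed.

Lemma mxadj_delta m n (i : 'I_m) (j : 'I_n) :
  mxadj (delta_mx i j : 'M[C]_(m, n)) = delta_mx j i.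
Proof. by apply/matrixP=> a b; rewrite !mxE rmorph_nat andbC. Qed.

Lemma mxadj_tens m n p q (A : 'M[C]_(m, n)) (B : 'M[C]_(p, q)) :
  mxadj (A *t B) = mxadj A *t mxadj B.
Proof. by apply/matrixP=> i j; rewrite !mxE rmorphM. Qed.

End Adjoint.

Section Psd.
Variable C : numClosedFieldType.

Lemma psdmxE n (A : 'M[C]_n) : psdmx A <-> forall u, 0 <= form conjC A u u.
Proof. by split=> psdA u; have := psdA u; rewrite /form mxadjE. Qed.

Lemma conjC_eq_of_polar (a b : C) :
  a + b \is Num.real -> 'i * (b - a) \is Num.real -> b^* = a.
Proof.
move=> /CrealP + /CrealP; rewrite rmorphM rmorphB rmorphD /= conjCi => hs hd.
apply/eqP.
have : (b^* - a) * 2 = 0.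
  have -> : (b^* - a) * 2 = (a^* + b^* - (a + b))
      + 'i * (- 'i * (b^* - a^*) - 'i * (b - a))
      + ('i ^+ 2 + 1) * (b^* - a^* + b - a) by ring.
  by rewrite hs hd !subrr mulr0 sqrCi addNr mul0r !addr0.
by move/eqP; rewrite mulf_eq0 pnatr_eq0 orbF subr_eq0.
Qed.

(* Polarization: the form is real at e_i + e_j and at e_i + 'i e_j. *)
Lemma psd_herm n (A : 'M[C]_n) : psdmx A -> mxadj A = A.
Proof.
move=> /psdmxE psdA; apply/matrixP=> i j; rewrite !mxE.
have real_form u : form conjC A u u \is Num.real by exact/ger0_real.
have cross u v : form conjC A (u + v) (u + v) - form conjC A u u
    - form conjC A v v = form conjC A u v + form conjC A v u.
  by rewrite !(formDl, formDr); ring.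
apply: conjC_eq_of_polar.
  by rewrite -[A i j](formee conjC) -[A j i](formee conjC) -cross !rpredB.
have -> : 'i * (A j i - A i j) =
    form conjC A ('e_i + 'i *: 'e_j) ('e_i + 'i *: 'e_j)
    - form conjC A 'e_i 'e_i - form conjC A ('i *: 'e_j) ('i *: 'e_j).
  by rewrite cross formZl formZr !formee /= conjCi; ring.
by rewrite !rpredB.
Qed.

Lemma psd_diag_ge0 n (A : 'M[C]_n) i : psdmx A -> 0 <= A i i.
Proof. by move=> /psdmxE /(_ 'e_i); rewrite formee. Qed.

Lemma psd_conj m n (K : 'M[C]_(m, n)) (A : 'M[C]_n) :
  psdmx A -> psdmx (K *m A *m mxadj K).
Proof. by move=> psdA v; have := psdA (v *m K); rewrite mxadjM !mulmxA. Qed.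

Lemma psd_conj_diag_ge0 m n (K : 'M[C]_(m, n)) (A : 'M[C]_n) i :
  psdmx A -> 0 <= (K *m A *m mxadj K) i i.
Proof. by move=> psdA; exact/psd_diag_ge0/psd_conj. Qed.

Lemma psd0 n : psdmx (0 : 'M[C]_n).
Proof. by move=> v; rewrite mulmx0 mul0mx mxE. Qed.

Lemma psdD n (A B : 'M[C]_n) : psdmx A -> psdmx B -> psdmx (A + B).
Proof. by move=> psdA psdB v; rewrite mulmxDr mulmxDl mxE addr_ge0. Qed.

Lemma psdZ n (c : C) (A : 'M[C]_n) : 0 <= c -> psdmx A -> psdmx (c *: A).
Proof. by move=> c_ge0 psdA v; rewrite -scalemxAr -scalemxAl mxE mulr_ge0. Qed.

Lemma psd_sum n (I : Type) (r : seq I) (P : pred I) (F : I -> 'M[C]_n) :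
  (forall i, P i -> psdmx (F i)) -> psdmx (\sum_(i <- r | P i) F i).
Proof.
by move=> psdF; elim/big_rec: _ => [|i B Pi]; [exact: psd0 | exact/psdD/psdF].
Qed.

Lemma psd_tr_ge0 n (A : 'M[C]_n) : psdmx A -> 0 <= \tr A.
Proof. by move=> psdA; apply: sumr_ge0 => i _; exact: psd_diag_ge0. Qed.

Lemma spectral_mulmx_adj n (A : 'M[C]_n) :
  spectralmx A *m mxadj (spectralmx A) = 1%:M.
Proof. by rewrite mxadjE; apply/unitarymxP/spectral_unitarymx. Qed.

Lemma spectral_adj_mulmx n (A : 'M[C]_n) :
  mxadj (spectralmx A) *m spectralmx A = 1%:M.
Proof.
by rewrite mxadjE -[_ *m _]mul1mx mulmxA mulmxKtV ?spectral_unitarymx.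
Qed.

Lemma herm_spectralE n (A : 'M[C]_n) : mxadj A = A ->
  A = mxadj (spectralmx A) *m diag_mx (spectral_diag A) *m spectralmx A.
Proof.
move=> hermA; rewrite mxadjE -invmx_unitary ?spectral_unitarymx //.
by apply/orthomx_spectralP; rewrite qualifE -mxadjE hermA.
Qed.

Lemma herm_spectral_diagE n (A : 'M[C]_n) : mxadj A = A ->
  spectralmx A *m A *m mxadj (spectralmx A) = diag_mx (spectral_diag A).
Proof.
move=> /herm_spectralE {2}->.
by rewrite !mulmxA spectral_mulmx_adj mul1mx -mulmxA spectral_mulmx_adj mulmx1.
Qed.

Lemma psd_spectral_diag_ge0 n (A : 'M[C]_n) i :
  psdmx A -> 0 <= spectral_diag A 0 i.
Proof.
move=> psdA; have /matrixP/(_ i i) := herm_spectral_diagE (psd_herm psdA).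
rewrite [diag_mx _ i i]mxE eqxx mulr1n => <-; exact: psd_conj_diag_ge0.
Qed.

Lemma herm_mxtrace_mulE n (X W : 'M[C]_n) : mxadj X = X ->
  \tr (W *m X) = \sum_i (spectralmx X *m W *m mxadj (spectralmx X)) i i
                        * spectral_diag X 0 i.
Proof.
move=> /herm_spectralE {1}->; rewrite !mulmxA mxtrace_mulC !mulmxA mul_mx_diag.
by apply: eq_bigr => i _; rewrite mxE.
Qed.

Lemma psd_tr_mul_ge0 n (A B : 'M[C]_n) :
  psdmx A -> psdmx B -> 0 <= \tr (A *m B).
Proof.
move=> psdA psdB; rewrite mxtrace_mulC (herm_mxtrace_mulE _ (psd_herm psdA)).
apply: sumr_ge0 => i _.
by rewrite mulr_ge0 ?psd_spectral_diag_ge0 ?psd_conj_diag_ge0.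
Qed.

End Psd.

Section Channel.
Variable C : numClosedFieldType.

Lemma psd_channel n m (ks : seq 'M[C]_(m, n)) rho :
  psdmx rho -> psdmx (apply_channel ks rho).
Proof. by move=> psd_rho; apply: psd_sum => K _; exact: psd_conj. Qed.

Lemma mxtrace_channel n m (ks : seq 'M[C]_(m, n)) rho :
  is_channel ks -> \tr (apply_channel ks rho) = \tr rho.
Proof.
move=> chan_ks; rewrite /apply_channel raddf_sum /=.
under eq_bigr => K _ do rewrite mxtrace_mulC mulmxA.
by rewrite -raddf_sum -mulmx_suml chan_ks mul1mx.
Qed.

Lemma apply_channelZ n m (ks : seq 'M[C]_(m, n)) c rho :
  apply_channel ks (c *: rho) = c *: apply_channel ks rho.
Proof.
rewrite /apply_channel scaler_sumr; apply: eq_bigr => K _.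
by rewrite -scalemxAr -scalemxAl.
Qed.

Lemma mulmx_delta_sandwich m n p (a : 'I_m) (j j' : 'I_n) (a' : 'I_p)
    (B : 'M[C]_n) :
  delta_mx a j *m B *m delta_mx j' a' = B j j' *: delta_mx a a'.
Proof.
rewrite -(mul_delta_mx (0 : 'I_1) a j) -(mul_delta_mx (0 : 'I_1) j' a').
rewrite -!mulmxA (mulmxA _ B) -rowE (mulmxA _ _ (delta_mx 0 a')) -colE.
by rewrite [col _ _]mx11_scalar mul_scalar_mx -scalemxAr mul_delta_mx !mxE.
Qed.

(* With tau = P^* diag(d) P, the Kraus operators are sqrt(d_a) P^* |a><j|:
   measure in the standard basis, discard the outcome j, and prepare the a-th
   eigenvector of tau with probability d_a. *)
Definition replace_kraus n (tau : 'M[C]_n) : seq 'M[C]_n :=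
  [seq mxadj (spectralmx tau) *m
         (sqrtC (spectral_diag tau 0 q.1) *: delta_mx q.1 q.2)
  | q <- index_enum ('I_n * 'I_n)%type].

Section Replace.
Variables (n : nat) (tau : 'M[C]_n).
Hypothesis psd_tau : psdmx tau.
Let P := spectralmx tau.
Let d := spectral_diag tau.

Lemma sqrtC_mul_conj_spectral a : sqrtC (d 0 a) * (sqrtC (d 0 a))^* = d 0 a.
Proof.
have d_ge0 := psd_spectral_diag_ge0 a psd_tau.
by rewrite conj_Creal ?sqrtC_real // -expr2 sqrtCK.
Qed.

Lemma mxtrace_spectral_diag : \tr (diag_mx d) = \tr tau.
Proof.
rewrite [in RHS](herm_spectralE (psd_herm psd_tau)) mxtrace_mulC mulmxA.
by rewrite spectral_mulmx_adj mul1mx.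
Qed.

Lemma replace_kraus_channel : \tr tau = 1 -> is_channel (replace_kraus tau).
Proof.
move=> tr_tau; rewrite /is_channel big_map.
rewrite (eq_bigr (fun q => d 0 q.1 *: delta_mx q.2 q.2)); last first.
  move=> [a j] _ /=; rewrite mxadjM mxadjK mxadjZ mxadj_delta -mulmxA.
  rewrite (mulmxA P) spectral_mulmx_adj mul1mx -scalemxAl -scalemxAr.
  by rewrite scalerA mul_delta_mx mulrC sqrtC_mul_conj_spectral.
rewrite -(pair_bigA _ (fun a j => d 0 a *: delta_mx j j)) /=.
under eq_bigr => a _ do rewrite -scaler_sumr -mx1_sum_delta.
by rewrite -scaler_suml -mxtrace_diag mxtrace_spectral_diag tr_tau scale1r.
Qed.

Lemma apply_replace_kraus rho :
  apply_channel (replace_kraus tau) rho = \tr rho *: tau.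
Proof.
rewrite /apply_channel big_map.
rewrite (eq_bigr (fun q => (d 0 q.1 * rho q.2 q.2) *:
                           (mxadj P *m delta_mx q.1 q.1 *m P))); last first.
  move=> [a j] _ /=; rewrite mxadjM mxadjK mxadjZ mxadj_delta.
  rewrite -!scalemxAr -!scalemxAl -!scalemxAr !scalerA.
  have -> : mxadj P *m delta_mx a j *m rho *m (delta_mx j a *m P) =
            mxadj P *m (delta_mx a j *m rho *m delta_mx j a) *m P.
    by rewrite !mulmxA.
  rewrite mulmx_delta_sandwich -scalemxAr -scalemxAl scalerA.
  by rewrite sqrtC_mul_conj_spectral.
rewrite -(pair_bigA _ (fun a j => (d 0 a * rho j j) *:
                                 (mxadj P *m delta_mx a a *m P))) /=.
under eq_bigr => a _ do rewrite -scaler_suml -mulr_sumr.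
rewrite [in RHS](herm_spectralE (psd_herm psd_tau)) diag_mx_sum_delta.
rewrite mulmx_sumr mulmx_suml scaler_sumr; apply: eq_bigr => a _.
by rewrite -scalemxAr -scalemxAl scalerA mulrC.
Qed.

End Replace.
End Channel.

Section TraceDistance.
Variables (C : numClosedFieldType) (n : nat).
Implicit Types (A X rho sigma : 'M[C]_n).

Lemma mxtrace_spectral_conj X A :
  \tr (spectralmx X *m A *m mxadj (spectralmx X)) = \tr A.
Proof. by rewrite mxtrace_mulC mulmxA spectral_adj_mulmx mul1mx. Qed.

Lemma herm_spectral_diag_conj X i : mxadj X = X ->
  spectral_diag X 0 i = (spectralmx X *m X *m mxadj (spectralmx X)) i i.
Proof. by move=> /herm_spectral_diagE ->; rewrite mxE eqxx mulr1n. Qed.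

Lemma psdB_herm rho sigma : psdmx rho -> psdmx sigma ->
  mxadj (rho - sigma) = rho - sigma.
Proof. by move=> psd_rho psd_sigma; rewrite mxadjD mxadjN !psd_herm. Qed.

Lemma trnormB_le2 rho sigma : density rho -> density sigma ->
  trnorm (rho - sigma) <= 2.
Proof.
move=> [psd_rho tr_rho] [psd_sigma tr_sigma].
set P := spectralmx (rho - sigma).
have -> : 2 = \tr (P *m rho *m mxadj P + P *m sigma *m mxadj P).
  by rewrite mxtraceD !mxtrace_spectral_conj tr_rho tr_sigma.
apply: ler_sum => i _; rewrite herm_spectral_diag_conj ?psdB_herm // -/P.
rewrite mulmxBr mulmxBl [(_ - _ : 'M_n) i i]mxE [(- _ : 'M_n) i i]mxE.
rewrite [(_ + _ : 'M_n) i i]mxE.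
by apply: le_trans (ler_normB _ _) _; rewrite !ger0_norm ?psd_conj_diag_ge0.
Qed.

Lemma povm_mxtrace_le_trnorm (M : bool -> 'M[C]_n) X : povm2 M ->
  mxadj X = X -> `|\tr ((M false - M true) *m X)| <= trnorm X.
Proof.
move=> [psdM sumM] herm_X; rewrite herm_mxtrace_mulE //.
set P := spectralmx X; set W := P *m (M false - M true) *m mxadj P.
have W_le1 i : `|W i i| <= 1.
  have : (P *m (M false + M true) *m mxadj P) i i = 1.
    by rewrite sumM mulmx1 spectral_mulmx_adj mxE eqxx.
  rewrite mulmxDr mulmxDl mxE => <-.
  rewrite /W mulmxBr mulmxBl [(_ - _ : 'M_n) i i]mxE [(- _ : 'M_n) i i]mxE.
  apply: le_trans (ler_normB _ _) _.
  by rewrite !ger0_norm ?psd_conj_diag_ge0.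
apply: le_trans (ler_norm_sum _ _ _) _; apply: ler_sum => i _.
by rewrite normrM ler_piMl ?W_le1.
Qed.

Lemma trdist_eq1_of_povm rho sigma (M : bool -> 'M[C]_n) :
  density rho -> density sigma -> povm2 M ->
  \tr (M false *m rho) = 1 -> \tr (M true *m sigma) = 1 -> trdist rho sigma = 1.
Proof.
move=> rho_st sigma_st M_povm M_rho M_sigma.
have [[psd_rho tr_rho] [psd_sigma tr_sigma]] := (rho_st, sigma_st).
have [_ sumM] := M_povm.
have M_true_rho : \tr (M true *m rho) = 0.
  have -> : M true = 1%:M - M false by rewrite -sumM addrC addKr.
  by rewrite mulmxBl mul1mx raddfB /= M_rho tr_rho subrr.
have M_false_sigma : \tr (M false *m sigma) = 0.
  have -> : M false = 1%:M - M true by rewrite -sumM addrK.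
  by rewrite mulmxBl mul1mx raddfB /= M_sigma tr_sigma subrr.
have distinguish : \tr ((M false - M true) *m (rho - sigma)) = 2.
  rewrite mulmxBl !mulmxBr !raddfB /= M_rho M_sigma M_true_rho M_false_sigma.
  by rewrite subr0 oppr0 sub0r opprK.
have trnorm2 : trnorm (rho - sigma) = 2.
  apply/le_anti; rewrite trnormB_le2 //=.
  by rewrite -[2]ger0_norm // -distinguish povm_mxtrace_le_trnorm ?psdB_herm.
by rewrite /trdist trnorm2 mulVf // pnatr_eq0.
Qed.

End TraceDistance.

Section Tensor.
Variable C : numClosedFieldType.

Lemma sum_mxtens_index (V : nmodType) m d (F : 'I_(m * d) -> V) :
  \sum_r F r = \sum_(x < m) \sum_(y < d) F (mxtens_index (x, y)).
Proof.
rewrite pair_bigA /= (reindex (@mxtens_index m d)) /=.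
  by apply: eq_bigr => -[x y] _.
by exists (@mxtens_unindex m d) => r _;
  [exact: mxtens_indexK | exact: mxtens_unindexK].
Qed.

Lemma tensmxDl m n p q (A B : 'M[C]_(m, n)) (D : 'M[C]_(p, q)) :
  (A + B) *t D = A *t D + B *t D.
Proof. by apply/matrixP=> i j; rewrite !mxE mulrDl. Qed.

Lemma tensmxDr m n p q (A : 'M[C]_(m, n)) (B D : 'M[C]_(p, q)) :
  A *t (B + D) = A *t B + A *t D.
Proof. by apply/matrixP=> i j; rewrite !mxE mulrDr. Qed.

Lemma tensmxZl m n p q c (A : 'M[C]_(m, n)) (D : 'M[C]_(p, q)) :
  (c *: A) *t D = c *: (A *t D).
Proof. by apply/matrixP=> i j; rewrite !mxE mulrA. Qed.

Lemma tensmx_suml m n p q (I : Type) (r : seq I) (P : pred I)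
    (F : I -> 'M[C]_(m, n)) (D : 'M[C]_(p, q)) :
  (\sum_(i <- r | P i) F i) *t D = \sum_(i <- r | P i) (F i *t D).
Proof.
by elim/big_rec2: _ => [|i A B _ <-]; [exact: tens0mx | rewrite tensmxDl].
Qed.

Lemma tensmx_sumr m n p q (I : Type) (r : seq I) (P : pred I)
    (A : 'M[C]_(m, n)) (F : I -> 'M[C]_(p, q)) :
  A *t (\sum_(i <- r | P i) F i) = \sum_(i <- r | P i) (A *t F i).
Proof.
by elim/big_rec2: _ => [|i B E _ <-]; [exact: tensmx0 | rewrite tensmxDr].
Qed.

Lemma mxtrace_tens m n (A : 'M[C]_m) (B : 'M[C]_n) :
  \tr (A *t B) = \tr A * \tr B.
Proof.
rewrite /mxtrace sum_mxtens_index mulr_suml; apply: eq_bigr => x _.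
by rewrite mulr_sumr; apply: eq_bigr => y _; rewrite tensmxE.
Qed.

Lemma tensmx11 m n : (1%:M : 'M[C]_m) *t (1%:M : 'M[C]_n) = 1%:M.
Proof.
apply/matrixP=> r s.
case: (mxtens_indexP r) => x y; case: (mxtens_indexP s) => x' y'.
rewrite tensmxE !mxE (inj_eq (can_inj (@mxtens_indexK m n))) xpair_eqE.
by case: (x == x'); case: (y == y'); rewrite ?mul0r ?mulr0 ?mul1r.
Qed.

Lemma apply_tens_id n m a (ks : seq 'M[C]_(m, n)) (Y : 'M[C]_n) (Q : 'M[C]_a) :
  apply_channel (tens_id a ks) (Y *t Q) = apply_channel ks Y *t Q.
Proof.
rewrite /apply_channel /tens_id big_map tensmx_suml; apply: eq_bigr => K _.
by rewrite mxadj_tens mxadj1 !tensmx_mul mul1mx mulmx1.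
Qed.

Lemma tens_id_channel n m a (ks : seq 'M[C]_(m, n)) :
  is_channel ks -> is_channel (tens_id a ks).
Proof.
rewrite /is_channel /tens_id big_map => chan_ks.
under eq_bigr => K _ do rewrite mxadj_tens mxadj1 tensmx_mul mul1mx.
by rewrite -tensmx_suml chan_ks tensmx11.
Qed.

(* [tens_ket k G] is G (x) |k>, written entrywise because 'M_(n * 1) is not
   convertible to 'M_n. *)
Definition tens_ket m d n (k : 'I_d) (G : 'M[C]_(m, n)) : 'M[C]_(m * d, n) :=
  \matrix_(r, c) (((mxtens_unindex r).2 == k)%:R * G (mxtens_unindex r).1 c).

Lemma tens_ket_mulmx m d n p (k : 'I_d) (G : 'M[C]_(m, n)) (B : 'M[C]_(n, p)) :
  tens_ket k G *m B = tens_ket k (G *m B).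
Proof.
apply/matrixP=> r c; rewrite !mxE mulr_sumr; apply: eq_bigr => l _.
by rewrite !mxE mulrA.
Qed.

Lemma tens_ket_mulmx_adj m d n p (k : 'I_d) (G : 'M[C]_(m, n))
    (H : 'M[C]_(p, n)) :
  tens_ket k G *m mxadj (tens_ket k H) =
  (G *m mxadj H) *t (delta_mx k k : 'M_d).
Proof.
apply/matrixP=> r s.
case: (mxtens_indexP r) => x y; case: (mxtens_indexP s) => x' y'.
rewrite tensmxE !mxE mulr_suml; apply: eq_bigr => c _.
rewrite !mxE !mxtens_indexK /= rmorphM rmorph_nat.
by case: (y == k); case: (y' == k); rewrite ?mul0r ?mulr0 ?mul1r ?mulr1.
Qed.

Lemma adj_tens_ket_mulmx m d n p (k : 'I_d) (G : 'M[C]_(m, n))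
    (H : 'M[C]_(m, p)) :
  mxadj (tens_ket k G) *m tens_ket k H = mxadj G *m H.
Proof.
apply/matrixP=> c c'; rewrite !mxE sum_mxtens_index; apply: eq_bigr => x _.
rewrite (bigD1 k) //= big1 ?addr0.
  by rewrite !mxE !mxtens_indexK /= eqxx rmorph1 !mul1r.
move=> y /negbTE y_neq_k.
by rewrite !mxE !mxtens_indexK /= y_neq_k !mul0r mulr0.
Qed.

Lemma psd_tens_delta n d (A : 'M[C]_n) (k : 'I_d) :
  psdmx A -> psdmx (A *t (delta_mx k k : 'M[C]_d)).
Proof.
move=> psdA; have -> : A *t (delta_mx k k : 'M[C]_d) =
    tens_ket k 1%:M *m A *m mxadj (tens_ket k (1%:M : 'M[C]_n)).
  by rewrite tens_ket_mulmx mul1mx tens_ket_mulmx_adj mxadj1 mulmx1.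
exact: psd_conj.
Qed.

End Tensor.

Section ClassicalRegister.
Variables (C : numClosedFieldType) (T : finType).

Definition ketbra (t : T) : 'M[C]_#|T| := delta_mx (enum_rank t) (enum_rank t).

Lemma sum_ketbra : \sum_t ketbra t = 1%:M.
Proof.
rewrite mx1_sum_delta (reindex (@enum_rank T)) //=.
by exists (@enum_val _ _) => t _; [exact: enum_rankK | exact: enum_valK].
Qed.

Lemma mxtrace_ketbra_mul t t' : \tr (ketbra t *m ketbra t') = (t == t')%:R.
Proof.
rewrite mul_delta_mx_cond (inj_eq enum_rank_inj).
case: eqP => [<-|_]; last first.
  by rewrite mulr0n mxtrace0.
rewrite mulr1n /mxtrace (bigD1 (enum_rank t)) //= big1 ?addr0.
  by rewrite mxE !eqxx.
by move=> i /negbTE i_neq; rewrite mxE i_neq.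
Qed.

Lemma mxtrace_tens_ketbra_mul n (D Y : T -> 'M[C]_n) (w : T -> C) :
  \tr ((\sum_t D t *t ketbra t) *m (\sum_t w t *: (Y t *t ketbra t))) =
  \sum_t w t * \tr (D t *m Y t).
Proof.
rewrite mulmx_suml raddf_sum /=; apply: eq_bigr => t _.
rewrite mulmx_sumr raddf_sum /= (bigD1 t) //= big1 ?addr0 => [|t' t'_neq].
  rewrite -scalemxAr mxtraceZ tensmx_mul mxtrace_tens.
  by rewrite mxtrace_ketbra_mul eqxx mulr1.
rewrite -scalemxAr mxtraceZ tensmx_mul mxtrace_tens mxtrace_ketbra_mul.
by rewrite eq_sym (negbTE t'_neq) !mulr0.
Qed.

End ClassicalRegister.

Lemma sumr_neq0_exists (V : zmodType) (I : finType) (F : I -> V) :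
  \sum_i F i != 0 -> exists i, F i != 0.
Proof.
move=> sum_neq0; apply/existsP; apply: contraNT sum_neq0 => /existsPn F0.
by apply/eqP/big1 => i _; exact/eqP/negbNE/F0.
Qed.

Section Qpke.
Variables (C : numClosedFieldType) (S : qpke C).
Hypothesis wfS : wf_qpke S.

Definition key_prob sk pk : C := skgen S sk * \tr (pkgen S sk pk).

Lemma skgen_ge0 sk : 0 <= skgen S sk.
Proof. by case: wfS => -[]. Qed.

Lemma psd_pkgen sk pk : psdmx (pkgen S sk pk).
Proof. by case: wfS => _ /(_ sk) [psd_sk _]. Qed.

Lemma sum_tr_pkgen sk : \sum_pk \tr (pkgen S sk pk) = 1.
Proof. by case: wfS => _ /(_ sk) []. Qed.

Lemma enc_channel pk m : is_channel (enc S pk m).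
Proof. by case: wfS. Qed.

Lemma dec_povm2 sk : povm2 (dec S sk).
Proof. by case: wfS. Qed.

Lemma sum_skgen : \sum_sk skgen S sk = 1.
Proof. by case: wfS => -[]. Qed.

Lemma sum_key_prob_pk sk : \sum_pk key_prob sk pk = skgen S sk.
Proof. by rewrite -mulr_sumr sum_tr_pkgen mulr1. Qed.

Lemma sum_key_prob : \sum_sk \sum_pk key_prob sk pk = 1.
Proof.
by under eq_bigr => sk _ do rewrite sum_key_prob_pk; exact: sum_skgen.
Qed.

Lemma exists_key_prob_neq0 : exists sk pk, key_prob sk pk != 0.
Proof.
have : \sum_sk \sum_pk key_prob sk pk != 0 by rewrite sum_key_prob oner_eq0.
by move=> /sumr_neq0_exists [sk /sumr_neq0_exists [pk]]; exists sk, pk.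
Qed.

Lemma exp_out_density dA (A : adversary S dA) m :
  is_adversary A -> density (exp_out A m).
Proof.
move=> advA; split.
  apply: psd_sum => sk _; apply: psdZ; first exact: skgen_ge0.
  by apply: psd_sum => pk _; apply/psd_channel/psd_channel/psd_pkgen.
rewrite raddf_sum /= -sum_skgen; apply: eq_bigr => sk _.
rewrite mxtraceZ raddf_sum /= -[RHS]mulr1 -(sum_tr_pkgen sk); congr (_ * _).
apply: eq_bigr => pk _.
by rewrite (mxtrace_channel _ (tens_id_channel _ (enc_channel pk m)))
  (mxtrace_channel _ (advA pk)).
Qed.

Definition dec_fail sk pk m : C :=
  \tr (dec S sk (~~ m) *m apply_channel (enc S pk m) (pkgen S sk pk)).

Lemma dec_fail_ge0 sk pk m : 0 <= dec_fail sk pk m.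
Proof.
apply: psd_tr_mul_ge0; first exact: (dec_povm2 sk).1.
exact/psd_channel/psd_pkgen.
Qed.

Lemma dec_successE sk pk m :
  \tr (dec S sk m *m apply_channel (enc S pk m) (pkgen S sk pk)) =
  \tr (pkgen S sk pk) - dec_fail sk pk m.
Proof.
rewrite -(mxtrace_channel _ (enc_channel pk m)) /dec_fail; apply/eqP.
rewrite eq_sym subr_eq -raddfD /= -mulmxDl.
have -> : dec S sk m + dec S sk (~~ m) = 1%:M.
  by rewrite -(dec_povm2 sk).2; case: m; rewrite // addrC.
by rewrite mul1mx.
Qed.

Section Correct.
Hypothesis corrS : correct S.

Lemma sum_skgen_dec_fail m : \sum_sk \sum_pk skgen S sk * dec_fail sk pk m = 0.
Proof.
transitivity (\sum_sk \sum_pk key_prob sk pk - success_prob S m).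
  rewrite /success_prob -sumrB; apply: eq_bigr => sk _.
  rewrite mulr_sumr -sumrB; apply: eq_bigr => pk _.
  by rewrite dec_successE /key_prob; ring.
by rewrite sum_key_prob corrS subrr.
Qed.

Lemma dec_perfect sk pk m : key_prob sk pk != 0 ->
  \tr (dec S sk m *m apply_channel (enc S pk m) (pkgen S sk pk)) =
  \tr (pkgen S sk pk).
Proof.
move=> key_prob_neq0; rewrite dec_successE.
have term_ge0 sk' pk' : 0 <= skgen S sk' * dec_fail sk' pk' m.
  by rewrite mulr_ge0 ?skgen_ge0 ?dec_fail_ge0.
have /eqP : skgen S sk * dec_fail sk pk m = 0.
  have row0 : \sum_pk' skgen S sk * dec_fail sk pk' m = 0.
    apply: (psumr_eq0P _ (sum_skgen_dec_fail m)) => // sk' _.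
    by apply: sumr_ge0 => pk' _; exact: term_ge0.
  by apply: (psumr_eq0P _ row0) => // pk' _; exact: term_ge0.
rewrite mulf_eq0 => /orP [/eqP skgen0 | /eqP ->]; last by rewrite subr0.
by move: key_prob_neq0; rewrite /key_prob skgen0 mul0r eqxx.
Qed.

Section Attack.
Variables (sk0 : SK S) (pk0 : PK S).
Hypothesis key_prob0 : key_prob sk0 pk0 != 0.

(* The fallback (sk0, pk0) is only used for public keys of probability 0; it
   keeps the forged state a density matrix. *)
Definition key_for pk : SK S * PK S :=
  if [pick sk | key_prob sk pk != 0] is Some sk then (sk, pk) else (sk0, pk0).

Lemma key_for_prob pk : key_prob (key_for pk).1 (key_for pk).2 != 0.
Proof. by rewrite /key_for; case: pickP. Qed.

Lemma key_for_snd sk pk : key_prob sk pk != 0 -> (key_for pk).2 = pk.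
Proof.
by move=> prob_sk; rewrite /key_for; case: pickP => // /(_ sk); rewrite prob_sk.
Qed.

Lemma tr_pkgen_neq0 sk pk : key_prob sk pk != 0 -> \tr (pkgen S sk pk) != 0.
Proof. by rewrite mulf_eq0 negb_or => /andP[]. Qed.

Definition forged_state pk : 'M[C]_(dK S) :=
  let: (sk, pk') := key_for pk in (\tr (pkgen S sk pk'))^-1 *: pkgen S sk pk'.

Lemma forged_state_density pk : density (forged_state pk).
Proof.
have := key_for_prob pk; rewrite /forged_state.
case: (key_for pk) => sk pk' /= prob.
split; last by rewrite mxtraceZ mulVf ?tr_pkgen_neq0.
apply: psdZ; last exact: psd_pkgen.
by rewrite invr_ge0; exact/psd_tr_ge0/psd_pkgen.
Qed.

Definition attack : adversary S #|PK S| := fun pk =>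
  [seq tens_ket (enum_rank pk) G | G <- replace_kraus (forged_state pk)].

Lemma attack_is_adversary : is_adversary attack.
Proof.
move=> pk; have [psd_st tr_st] := forged_state_density pk.
rewrite /is_channel big_map; under eq_bigr => G _ do rewrite adj_tens_ket_mulmx.
exact: replace_kraus_channel.
Qed.

Lemma apply_attack pk sigma :
  apply_channel (attack pk) sigma =
  (\tr sigma *: forged_state pk) *t ketbra C pk.
Proof.
rewrite /apply_channel big_map.
under eq_bigr => G _ do rewrite tens_ket_mulmx tens_ket_mulmx_adj.
rewrite -tensmx_suml -/(apply_channel _ sigma) apply_replace_kraus //.
by case: (forged_state_density pk).
Qed.

Definition pk_prob pk : C := \sum_sk key_prob sk pk.

Lemma exp_out_attack m : exp_out attack m =
  \sum_pk pk_prob pk *: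
    (apply_channel (enc S pk m) (forged_state pk) *t ketbra C pk).
Proof.
rewrite /exp_out; under eq_bigr => sk _ do under eq_bigr => pk _ do
  rewrite apply_attack apply_tens_id apply_channelZ tensmxZl.
under eq_bigr => sk _ do rewrite scaler_sumr.
rewrite exchange_big /=; apply: eq_bigr => pk _.
by rewrite /pk_prob scaler_suml; apply: eq_bigr => sk _; rewrite scalerA.
Qed.

Lemma forged_state_decodes pk m : pk_prob pk != 0 ->
  \tr (dec S (key_for pk).1 m *m
       apply_channel (enc S pk m) (forged_state pk)) = 1.
Proof.
move=> /sumr_neq0_exists [sk prob_sk].
move: (key_for_prob pk) (key_for_snd prob_sk); rewrite /forged_state.
case: (key_for pk) => sk' pk' /= prob' pk'E; rewrite pk'E in prob' *.
rewrite apply_channelZ -scalemxAr mxtraceZ dec_perfect //.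
by rewrite mulVf ?tr_pkgen_neq0.
Qed.

Definition attack_povm m : 'M[C]_(dCT S * #|PK S|) :=
  \sum_pk dec S (key_for pk).1 m *t ketbra C pk.

Lemma attack_povm2 : povm2 attack_povm.
Proof.
split=> [b|].
  by apply: psd_sum => pk _; exact/psd_tens_delta/(dec_povm2 _).1.
rewrite -big_split /=.
under eq_bigr => pk _ do rewrite -tensmxDl (dec_povm2 _).2.
by rewrite -tensmx_sumr sum_ketbra tensmx11.
Qed.

Lemma attack_decodes m : \tr (attack_povm m *m exp_out attack m) = 1.
Proof.
rewrite exp_out_attack mxtrace_tens_ketbra_mul -sum_key_prob exchange_big /=.
apply: eq_bigr => pk _; rewrite -/(pk_prob pk).
have [->|pk_prob_neq0] := eqVneq (pk_prob pk) 0; first by rewrite mul0r.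
by rewrite forged_state_decodes ?mulr1.
Qed.

End Attack.
End Correct.
End Qpke.

Theorem theoremA1 (C : numClosedFieldType) (S : nat -> qpke C)
  (wfS : forall lambda, wf_qpke (S lambda))
  (corrS : forall lambda, correct (S lambda)) :
  forall lambda, exists (dA : nat) (A : adversary (S lambda) dA),
    is_adversary A /\
    (exists M : bool -> 'M[C]_(dCT (S lambda) * dA),
        povm2 M /\ forall m, \tr (M m *m exp_out A m) = 1) /\
    trdist (exp_out A false) (exp_out A true) = 1.
Proof.
move=> lambda; have [sk0 [pk0 key_prob0]] := exists_key_prob_neq0 (wfS lambda).
have attack_adv := attack_is_adversary (wfS lambda) key_prob0.
have povm := attack_povm2 (wfS lambda) sk0 pk0.
have decodes := attack_decodes (wfS lambda) (corrS lambda) key_prob0.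
exists #|PK (S lambda)|, (attack sk0 pk0); split=> //; split.
  by exists (attack_povm sk0 pk0).
have density_out m := exp_out_density (wfS lambda) m attack_adv.
exact: trdist_eq1_of_povm (density_out false) (density_out true) povm
  (decodes false) (decodes true).
Qed.
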